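(* Let $n$ be an even positive integer and $\ell\ge 2$ an integer. Then $\max(n,\ell)=\binom{n}{2}-\frac{n}{2}$ if and only if $\gcd(n-1,\ell)=1$. Moreover, if $n$ is even and $\gcd(n-1,\ell)=1$, then $\overline{M_n}$ is (up to isomorphism) the unique $N$-AW graph of maximum size on $n$ vertices.
   Context: All graphs are finite and simple; $\overline{G}$ is the complement of $G$. Vertex labels lie in $\mathbb{Z}_\ell$. In the neighborhood Lights Out game on $G$, toggling a vertex $v$ adds $1$ (mod $\ell$) to the label of each vertex of the closed neighborhood $N[v]$; the game is won when all labels are $0$. $G$ is $N$-AW if the game can be won from every initial labeling $V(G)\to\mathbb{Z}_\ell$. $\max(n,\ell)$ is the maximum number of edges of an $N$-AW graph on $n$ vertices. For even $n$, $M_n$ denotes a perfect matching on $n$ vertices. *)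

From mathcomp Require Import all_boot all_algebra all_fingroup.
Set Implicit Arguments. Unset Strict Implicit. Unset Printing Implicit Defensive.
Import GRing.Theory.
Local Open Scope ring_scope.

Definition simple_graph (n : nat) (e : rel 'I_n) : Prop :=
  irreflexive e /\ symmetric e.

Definition nedges (n : nat) (e : rel 'I_n) : nat :=
  #|[set p : 'I_n * 'I_n | e p.1 p.2 && (p.1 < p.2)%N]|.

(* Neighborhood Lights Out over Z_l: toggling u (t u times) adds t u to every
   vertex of N[u].  G is N-AW if every initial labeling can be turned into 0. *)
Definition N_AW (l n : nat) (e : rel 'I_n) : Prop :=
  forall init : 'I_n -> 'Z_l,
    exists t : 'I_n -> nat,
      forall v : 'I_n,
        init v + \sum_(u : 'I_n | (u == v) || e u v) (t u)%:R = 0.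

Definition is_maxAW (n l m : nat) : Prop :=
  (exists e : rel 'I_n, [/\ simple_graph e, N_AW l e & nedges e = m]) /\
  (forall e : rel 'I_n, simple_graph e -> N_AW l e -> (nedges e <= m)%N).

(* The perfect matching M_n pairing 2k with 2k+1 and its complement. *)
Definition matching_rel (n : nat) : rel 'I_n :=
  fun i j => (i != j) && ((i : nat)./2 == (j : nat)./2).
Definition compl_rel (n : nat) (e : rel 'I_n) : rel 'I_n :=
  fun i j => (i != j) && ~~ e i j.

Definition graph_iso (n : nat) (e e' : rel 'I_n) : Prop :=
  exists f : {perm 'I_n}, forall u v, e u v = e' (f u) (f v).
Arguments matching_rel n : clear implicits.

From mathcomp Require Import all_boot all_algebra all_fingroup.
From mathcomp Require Import zify ring.

(* Toggling a single vertex of an N-AW graph must be undoable, so no two vertices share a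
   closed neighbourhood; equivalently no two vertices of the complement C share an open
   neighbourhood.  For even n this forces C to have at least n/2 edges, with equality only
   for a perfect matching: C has at most one isolated vertex, a degree excess of exactly one
   would give two leaves with a common neighbour, and the handshake parity excludes the rest.
   If C is a perfect matching with partner map p, the closed neighbourhood of v is everything
   but p v, and summing the Lights Out equations shows that the game is always winnable iff
   n - 1 is invertible mod l.  Finally, any two perfect matchings on n vertices are
   isomorphic. *)
Set Implicit Arguments. Unset Strict Implicit. Unset Printing Implicit Defensive.
Import GRing.Theory.

Definition nbhd (T : finType) (c : rel T) (v : T) : {set T} := [set w | c v w].

Section Handshake.
Variables (T : finType) (c : rel T).

Lemma sum_card_nbhd : \sum_v #|nbhd c v| = #|[set p : T * T | c p.1 p.2]|.
Proof.
have card_set (S : finType) (P : pred S) : #|[set x | P x]| = \sum_x P x.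
  by rewrite -sum1_card big_mkcond; apply: eq_bigr => x _; rewrite inE; case: (P x).
rewrite card_set -(pair_bigA _ (fun u w => nat_of_bool (c u w))).
by apply: eq_bigr => v _; rewrite card_set.
Qed.

Hypotheses (c_irr : irreflexive c) (c_sym : symmetric c).

Lemma card_sym_pairs (k : T -> nat) : injective k ->
  #|[set p : T * T | c p.1 p.2]| = #|[set p : T * T | c p.1 p.2 && (k p.1 < k p.2)]|.*2.
Proof.
move=> k_inj; set B := [set p : T * T | _ && _].
have swapK : involutive (fun p : T * T => (p.2, p.1)) by case.
have -> : [set p : T * T | c p.1 p.2] = B :|: (fun p => (p.2, p.1)) @^-1: B.
  apply/setP => -[u w]; rewrite !inE /= (c_sym w u).
  case: (ltngtP (k u) (k w)) => [_|_|/k_inj ->]; rewrite ?andbT ?andbF ?orbF ?c_irr //.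
rewrite cardsU card_preimset -?addnn; last exact: inv_inj swapK.
suff -> : B :&: (fun p => (p.2, p.1)) @^-1: B = set0 by rewrite cards0 subn0.
by apply/setP => -[u w]; rewrite !inE /=; case: ltngtP; rewrite ?andbF.
Qed.

Lemma sum_card_nbhd_even : ~~ odd (\sum_v #|nbhd c v|).
Proof.
rewrite sum_card_nbhd (card_sym_pairs (k := fun v => enum_rank v : nat)) ?odd_double //.
by move=> u w /val_inj /enum_rank_inj.
Qed.

End Handshake.

Lemma compl_simple n (e : rel 'I_n) : simple_graph e -> simple_graph (compl_rel e).
Proof. by case=> _ e_sym; split=> [u | u w]; rewrite /compl_rel ?eqxx // eq_sym e_sym. Qed.

Lemma sum_card_nbhd_nedges n (e : rel 'I_n) :
  simple_graph e -> \sum_v #|nbhd e v| = (nedges e).*2.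
Proof. by case=> irr sym; rewrite sum_card_nbhd (card_sym_pairs irr sym (@ord_inj n)). Qed.

Lemma card_nbhd_compl n (e : rel 'I_n) v :
  irreflexive e -> #|nbhd e v| + #|nbhd (compl_rel e) v| = n.-1.
Proof.
move=> e_irr; rewrite -[in RHS](card_ord n) -(cardsC1 v) -(cardsID (nbhd e v) [set~ v]).
congr (_ + _); apply: eq_card => w.
  by rewrite !inE; case: eqVneq => [->|]; rewrite ?e_irr ?andbF.
by rewrite !inE /compl_rel andbC eq_sym.
Qed.

Lemma nedges_compl n (e : rel 'I_n) :
  simple_graph e -> nedges e + nedges (compl_rel e) = 'C(n, 2).
Proof.
move=> e_simple; have [e_irr _] := e_simple; apply: double_inj.
rewrite doubleD -(sum_card_nbhd_nedges e_simple).
rewrite -(sum_card_nbhd_nedges (compl_simple e_simple)).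
rewrite -big_split /= (eq_bigr _ (fun v _ => card_nbhd_compl v e_irr)).
rewrite sum_nat_const card_ord bin2.
by rewrite -[LHS]odd_double_half oddM; case: (n) => //= m; rewrite andNb.
Qed.

Lemma sum_nat_predn (I : finType) (f : I -> nat) :
  \sum_i f i + #|[pred i | f i == 0]| = #|I| + \sum_i (f i).-1.
Proof.
rewrite -!sum1_card [X in _ + X = _]big_mkcond [X in _ = X + _]big_mkcond -!big_split.
by apply: eq_bigr => i _; rewrite inE; case: (f i) => //= k; rewrite addn0.
Qed.

Section TwinFree.
Variables (T : finType) (c : rel T).
Hypotheses (c_irr : irreflexive c) (c_sym : symmetric c) (nbhd_inj : injective (nbhd c)).

Lemma card_isolated_le1 : #|[pred v | #|nbhd c v| == 0]| <= 1.
Proof.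
apply/card_le1P => u; rewrite inE cards_eq0 => /eqP u0 w.
by rewrite !inE cards_eq0; apply/eqP/eqP => [w0 | ->] //; apply: nbhd_inj; rewrite u0 w0.
Qed.

Lemma leaf_nbhd v b : #|nbhd c v| <= 1 -> b \in nbhd c v -> nbhd c v = [set b].
Proof. by move=> v_le1 vb; apply/eqP; rewrite eq_sym eqEcard sub1set vb cards1. Qed.

Lemma sum_predn_card_nbhd_neq1 : \sum_v (#|nbhd c v|).-1 != 1.
Proof.
apply/eqP => excess1.
have /forallPn [b /= b_pos] : ~~ [forall v, (#|nbhd c v|).-1 == 0].
  by apply/forallP => all0; move: excess1; rewrite big1 // => v _; apply/eqP.
move: excess1; rewrite (bigD1 b) //= => excess1.
have : \sum_(v | v != b) (#|nbhd c v|).-1 == 0.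
  by apply/eqP; move: b_pos excess1; lia.
rewrite sum_nat_eq0 => /forallP rest.
have b_gt1 : 1 < #|nbhd c b| by move: b_pos; lia.
have leaf x : x \in nbhd c b -> nbhd c x = [set b].
  rewrite inE => cbx; apply: leaf_nbhd; last by rewrite inE c_sym.
  have xb : x != b by apply: contraTneq cbx => ->; rewrite c_irr.
  by have := rest x; rewrite xb /=; lia.
have [a [a' [ha ha' aa']]] := card_gt1P b_gt1.
by move/eqP: aa'; apply; apply: nbhd_inj; rewrite (leaf a) // (leaf a').
Qed.

Lemma twinfree_sum_card_nbhd : ~~ odd #|T| ->
  #|T| <= \sum_v #|nbhd c v| ?= iff [forall v, #|nbhd c v| == 1].
Proof.
move=> T_even; have S_even := sum_card_nbhd_even c_irr c_sym.
have count : \sum_v #|nbhd c v| + #|[pred v | #|nbhd c v| == 0]|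
             = #|T| + \sum_v (#|nbhd c v|).-1 := sum_nat_predn _.
have isolated_le1 := card_isolated_le1; have excess_neq1 := sum_predn_card_nbhd_neq1.
split; first by lia.
apply/eqP/forallP => [S_eq v | all1]; last first.
  by rewrite (eq_bigr (fun _ => 1)) => [|v _]; [rewrite sum1_card | apply/eqP].
have : \sum_v (#|nbhd c v|).-1 == 0 by apply/eqP; lia.
rewrite sum_nat_eq0 => /forallP /(_ v) /eqP v_le1.
have /card0_eq /(_ v) : #|[pred v | #|nbhd c v| == 0]| = 0 by lia.
by rewrite inE => /negbT; lia.
Qed.

End TwinFree.

Lemma closed_nbhdE n (e : rel 'I_n) (u v : 'I_n) :
  symmetric e -> ((u == v) || e u v) = (u \notin nbhd (compl_rel e) v).
Proof. by move=> e_sym; rewrite inE /compl_rel negb_and !negbK eq_sym e_sym. Qed.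

Lemma N_AW_nbhd_compl_inj n l (e : rel 'I_n) :
  symmetric e -> N_AW l e -> injective (nbhd (compl_rel e)).
Proof.
move=> e_sym aw u w same_nbhd; apply/eqP/negPn/negP => uw.
have [t ht] := aw (fun v => if v == u then 1%R else 0%R).
have := ht u; have := ht w; rewrite eqxx eq_sym (negbTE uw) add0r.
rewrite (eq_bigl _ _ (fun x => closed_nbhdE x w e_sym)) -same_nbhd.
rewrite -(eq_bigl _ _ (fun x => closed_nbhdE x u e_sym)) => ->.
by rewrite addr0; apply/eqP; rewrite oner_eq0.
Qed.

Definition partner (T : finType) (c : rel T) (v : T) : T := odflt v [pick w in nbhd c v].

Section Partner.
Variables (T : finType) (c : rel T).
Hypothesis card_nbhd1 : forall v, #|nbhd c v| = 1.

Lemma partnerE v w : c v w = (w == partner c v).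
Proof.
have /eqP/cards1P [x nbhd_v] := card_nbhd1 v.
have cvE y : c v y = (y == x) by rewrite -in_set1 -nbhd_v inE.
rewrite /partner; case: pickP => [y | none] /=; first by rewrite inE cvE => /eqP ->.
by have := none x; rewrite inE cvE eqxx.
Qed.

Lemma partnerK : symmetric c -> involutive (partner c).
Proof. by move=> c_sym v; apply/eqP; rewrite eq_sym -partnerE c_sym partnerE. Qed.

Lemma partner_neq : irreflexive c -> forall v, partner c v != v.
Proof. by move=> c_irr v; rewrite eq_sym -partnerE c_irr. Qed.

End Partner.

Section ComplementOfMatching.
Local Open Scope ring_scope.
Variables (n l : nat) (e : rel 'I_n).
Hypotheses (e_simple : simple_graph e) (compl_card_nbhd1 : forall v, #|nbhd (compl_rel e) v| = 1%N).
Let p := partner (compl_rel e).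

Let pK : involutive p.
Proof. by apply: partnerK => //; case: (compl_simple e_simple). Qed.

Lemma sum_closed_nbhd (V : zmodType) (x : 'I_n -> V) v :
  \sum_(u | (u == v) || e u v) x u = \sum_u x u - x (p v).
Proof.
have [_ e_sym] := e_simple.
rewrite [in RHS](bigD1 (p v)) //= addrAC subrr add0r; apply: eq_bigl => u.
by rewrite closed_nbhdE // inE partnerE.
Qed.

Lemma sum_partner (V : zmodType) (x : 'I_n -> V) : \sum_u x (p u) = \sum_u x u.
Proof. by rewrite (reindex_inj (inv_inj pK)); apply: eq_bigr => u _; rewrite pK. Qed.

Lemma N_AW_unit : (0 < n)%N -> N_AW l e -> (n.-1)%:R \is a @GRing.unit 'Z_l.
Proof.
move=> n_gt0 aw; pose delta v : 'Z_l := if v == Ordinal n_gt0 then 1 else 0.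
have [t ht] := aw delta; set s := \sum_u (t u)%:R : 'Z_l.
have : \sum_v (delta v + \sum_(u | (u == v) || e u v) (t u)%:R) = 0.
  by apply: big1 => v _; apply: ht.
rewrite big_split /= -big_mkcond big_pred1_eq.
under eq_bigr do rewrite sum_closed_nbhd.
rewrite sumrB (sum_partner (fun u => (t u)%:R)) -/s sumr_const card_ord.
rewrite -[X in s *+ X](prednK n_gt0) mulrSr addrK.
move=> /(canRL (addKr 1)); rewrite addr0 => inv.
by apply/unitrPr; exists (- s); rewrite mulrN mulr_natl inv opprK.
Qed.

(* With [(n - 1) s = - \sum_v init v], toggling each [w] exactly [s + init (p w)] times
   clears the board. *)
Lemma unit_N_AW : (0 < n)%N -> (n.-1)%:R \is a @GRing.unit 'Z_l -> N_AW l e.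
Proof.
move=> n_gt0 unit init; set B := \sum_v init v.
pose s := - B / (n.-1)%:R.
have sn : s *+ n = s - B.
  by rewrite -[X in s *+ X](prednK n_gt0) mulrSr -mulr_natr divrK // addrC.
exists (fun w => val (s + init (p w))) => v.
under eq_bigr do rewrite natr_Zp.
rewrite sum_closed_nbhd pK big_split (sum_partner init) sumr_const card_ord sn.
by rewrite /= -/B subrK; ring.
Qed.

End ComplementOfMatching.

Section MatchingPerm.
Variables (n : nat) (p : 'I_n -> 'I_n).
Hypotheses (pK : involutive p) (p_neq : forall v, p v != v).

Let lower := [set v : 'I_n | v < p v].
Let rep v := if v \in lower then v else p v.
Let rank v := index (rep v) (enum lower).

Lemma mem_lower_p v : (p v \in lower) = (v \notin lower).
Proof. by rewrite !inE pK; have := p_neq v; rewrite -val_eqE /=; lia. Qed.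

Lemma rep_lower v : rep v \in lower.
Proof. by rewrite /rep; case: ifP => // /negbT; rewrite -mem_lower_p. Qed.

Lemma eq_rep u v : (rep u == rep v) = (u == v) || (u == p v).
Proof.
case: (eqVneq u v) => [-> | uv] /=; first by rewrite eqxx.
case: (eqVneq u (p v)) => [-> | upv].
  by rewrite /rep mem_lower_p pK; case: (v \in lower); rewrite ?eqxx.
have pu_v : p u != v by apply: contraNneq upv => <-; rewrite pK.
by apply/negbTE; rewrite /rep; do 2!case: ifP => _; rewrite ?(inj_eq (inv_inj pK)).
Qed.

Lemma card_lower : #|lower|.*2 <= n.
Proof.
have : #|p @: lower| <= #|~: lower|.
  by apply/subset_leq_card/subsetP => _ /imsetP [v vL ->]; rewrite inE mem_lower_p vL.
rewrite card_imset; last exact: inv_inj pK.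
by rewrite -addnn -(leq_add2l #|lower|) cardsC card_ord.
Qed.

Lemma eq_rank u v : (rank u == rank v) = (rep u == rep v).
Proof.
rewrite /rank; apply/eqP/eqP => [eq_idx | -> //].
by apply: (index_inj u) eq_idx; rewrite mem_enum rep_lower.
Qed.

(* [code v] is [2 k] or [2 k + 1], where [k] ranks the lower end of the pair [{v, p v}]. *)
Let code v := (v \notin lower) + (rank v).*2.

Lemma code_lt v : code v < n.
Proof.
have : rank v < #|lower| by rewrite cardE index_mem mem_enum rep_lower.
by have := card_lower; rewrite /code; case: (v \notin lower) => /=; lia.
Qed.

Let code_ord v : 'I_n := Ordinal (code_lt v).

Lemma code_inj : injective code_ord.
Proof.
move=> u v /(congr1 val) /= code_uv.
move/(congr1 half): (code_uv); rewrite !half_bit_double => /eqP.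
rewrite eq_rank eq_rep => /orP [/eqP // | /eqP upv].
move/(congr1 odd): code_uv; rewrite !oddD !odd_double !addbF upv mem_lower_p.
by case: (v \in lower).
Qed.

Lemma matching_perm : exists f : {perm 'I_n}, forall u v, matching_rel n (f u) (f v) = (u == p v).
Proof.
exists (perm code_inj) => u v; rewrite !permE /matching_rel (inj_eq code_inj) /=.
rewrite !half_bit_double eq_rank eq_rep; case: eqVneq => [-> | //].
by rewrite eq_sym (negbTE (p_neq v)).
Qed.

End MatchingPerm.

Lemma graph_iso_compl_matching n (e : rel 'I_n) : simple_graph e ->
  (forall v, #|nbhd (compl_rel e) v| = 1) -> graph_iso e (compl_rel (matching_rel n)).
Proof.
move=> e_simple deg1; have [e_irr e_sym] := e_simple.
have [c_irr c_sym] := compl_simple e_simple.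
have [f fE] := matching_perm (partnerK deg1 c_sym) (partner_neq deg1 c_irr).
exists f => u v; rewrite /compl_rel fE (inj_eq perm_inj) -partnerE //.
by rewrite /compl_rel eq_sym e_sym; case: eqVneq => [->|] //=; rewrite ?e_irr ?negbK.
Qed.

Lemma N_AW_coprime n l (e : rel 'I_n) : 0 < n -> 1 < l -> simple_graph e ->
  (forall v, #|nbhd (compl_rel e) v| = 1) -> N_AW l e <-> coprime n.-1 l.
Proof.
move=> n_gt0 l_gt1 e_simple deg1; rewrite coprime_sym -unitZpE //.
by split; [exact: N_AW_unit | exact: unit_N_AW].
Qed.

Lemma N_AW_nedges_compl n l (e : rel 'I_n) : ~~ odd n -> simple_graph e -> N_AW l e ->
  n <= (nedges (compl_rel e)).*2 ?= iff [forall v, #|nbhd (compl_rel e) v| == 1].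
Proof.
move=> n_even e_simple aw; have [c_irr c_sym] := compl_simple e_simple.
have [_ e_sym] := e_simple.
have := twinfree_sum_card_nbhd c_irr c_sym (N_AW_nbhd_compl_inj e_sym aw).
by rewrite card_ord sum_card_nbhd_nedges ?compl_simple //; apply.
Qed.

Lemma N_AW_nedges n l (e : rel 'I_n) : ~~ odd n -> simple_graph e -> N_AW l e ->
  nedges e <= 'C(n, 2) - n./2 ?= iff [forall v, #|nbhd (compl_rel e) v| == 1].
Proof.
move=> n_even e_simple aw; have [le_compl eq_compl] := N_AW_nedges_compl n_even e_simple aw.
have := nedges_compl e_simple; split; first by lia.
by rewrite -eq_compl; apply/eqP/eqP; lia.
Qed.

Lemma compl_relK n (e : rel 'I_n) : irreflexive e -> compl_rel (compl_rel e) =2 e.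
Proof.
by move=> e_irr u v; rewrite /compl_rel negb_and !negbK; case: eqVneq => [->|] /=; rewrite ?e_irr.
Qed.

Lemma matching_simple n : simple_graph (matching_rel n).
Proof.
by split=> [u | u v]; rewrite /matching_rel ?eqxx // eq_sym [_./2 == _]eq_sym.
Qed.

Lemma card_nbhd_matching n v : ~~ odd n -> #|nbhd (matching_rel n) v| = 1.
Proof.
move=> n_even; have v_lt := ltn_ord v.
have w_lt : (if odd v then v.-1 else v.+1) < n by case: ifP => [/idP | /negbT]; lia.
apply/eqP/cards1P; exists (Ordinal w_lt); apply/setP => w.
rewrite !inE /matching_rel -!val_eqE /=.
by case: ifP w_lt => [/idP | /negbT] odd_v _; apply/idP/idP; lia.
Qed.

Theorem proposition4p3 (n l : nat) :
  (0 < n)%N -> ~~ odd n -> (2 <= l)%N ->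
  (is_maxAW n l ('C(n, 2) - n./2) <-> coprime n.-1 l) /\
  (coprime n.-1 l ->
     N_AW l (compl_rel (matching_rel n)) /\
     forall e : rel 'I_n, simple_graph e -> N_AW l e ->
       nedges e = ('C(n, 2) - n./2)%N ->
       graph_iso e (compl_rel (matching_rel n))).
Proof.
move=> n_gt0 n_even l_gt1; set cM := compl_rel (matching_rel n).
have cM_simple : simple_graph cM := compl_simple (matching_simple n).
have cM_deg1 v : #|nbhd (compl_rel cM) v| = 1.
  have [M_irr _] := matching_simple n.
  have -> : nbhd (compl_rel cM) v = nbhd (matching_rel n) v.
    by apply/setP => w; rewrite !inE compl_relK.
  exact: card_nbhd_matching.
have cM_size : nedges cM = 'C(n, 2) - n./2.
  have := sum_card_nbhd_nedges (compl_simple cM_simple); have := nedges_compl cM_simple.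
  by rewrite (eq_bigr _ (fun v _ => cM_deg1 v)) sum1_card card_ord; lia.
have cM_AW : N_AW l cM <-> coprime n.-1 l := N_AW_coprime n_gt0 l_gt1 cM_simple cM_deg1.
have extremal (e : rel 'I_n) : simple_graph e -> N_AW l e -> nedges e = 'C(n, 2) - n./2 ->
    forall v, #|nbhd (compl_rel e) v| = 1.
  move=> e_simple aw e_size v; apply/eqP; move: v; apply/forallP.
  by rewrite -(N_AW_nedges n_even e_simple aw).2 e_size.
split; first split.
- case=> [[e [e_simple aw e_size]] _].
  by rewrite -(N_AW_coprime n_gt0 l_gt1 e_simple (extremal e e_simple aw e_size)).
- move=> coprime_l; split; last by move=> e e_simple aw; apply: (N_AW_nedges n_even e_simple aw).
  by exists cM; split; rewrite ?cM_AW.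
move=> coprime_l; split; first exact/cM_AW.
by move=> e e_simple aw e_size; apply: graph_iso_compl_matching (extremal e e_simple aw e_size).
Qed.
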